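(* Let $p\ge 5$ be a prime and $m\in\mathbb{N}$. If there exist $u,v\in\mathbb{Z}$ with $\gcd(u,v)=1$ such that $$u+\delta_4 v=3^m\quad\text{and}\quad H_p(u,v)=1,$$ then $p\equiv 5$ or $11\pmod{24}$.
   Context: For an odd prime $p$ put $\delta_4=1$ if $p\equiv 1\pmod 4$, $\delta_4=-1$ if $p\equiv 3\pmod 4$. Let $G_p(u,v)=\mathrm{Im}\big((1+i)(u+iv)^p\big)\in\mathbb{Z}[u,v]$ (for real $u,v$); $u+\delta_4 v$ divides $G_p$ in $\mathbb{Z}[u,v]$, and $H_p(u,v):=G_p(u,v)/(u+\delta_4 v)\in\mathbb{Z}[u,v]$. $\mathbb{N}$ denotes the positive integers. *)

From HB Require Import structures.
From mathcomp Require Import all_boot all_order all_algebra.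
Set Implicit Arguments. Unset Strict Implicit. Unset Printing Implicit Defensive.
Import Order.TTheory GRing.Theory Num.Theory.
Local Open Scope ring_scope.

Definition delta4 (p : nat) : int := if (p %% 4 == 1)%N then 1 else -1.

(* Im((1+i)(u+iv)^p) = Re + Im of (u+iv)^p
   = sum_k (-1)^(floor(k/2)) C(p,k) u^(p-k) v^k. gcoef p k is the coefficient of
   u^(p-k) v^k in G_p. *)
Definition gcoef (p k : nat) : int := (-1) ^+ (k./2) * ('C(p, k))%:Z.

Definition G (p : nat) (u v : int) : int :=
  \sum_(k < p.+1) gcoef p k * u ^+ (p - k) * v ^+ k.

(* Coefficients of the quotient H_p = G_p / (u + delta4 v), computed by exact
   (synthetic) division of the homogeneous polynomial G_p by u + delta4 v:
   h_0 = g_0, h_(j+1) = g_(j+1) - delta4 * h_j. *)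
Fixpoint hcoef (p j : nat) : int :=
  match j with
  | 0 => gcoef p 0
  | j'.+1 => gcoef p j'.+1 - delta4 p * hcoef p j'
  end.

Definition H (p : nat) (u v : int) : int :=
  \sum_(j < p) hcoef p j * u ^+ (p.-1 - j) * v ^+ j.

From HB Require Import structures.
From mathcomp Require Import all_boot all_order all_algebra.
From mathcomp Require Import complex ring zify.
Set Implicit Arguments.
Unset Strict Implicit.
Unset Printing Implicit Defensive.

Import Order.TTheory GRing.Theory Num.Theory.
Local Open Scope ring_scope.
Import ComplexField.

(* Put s = u + delta4 v and n = (p - 1)/2, so that u + i v = s + v (i - delta4).
   Expanding binomially, G_p(u, v) is the sum of C(p, j) s^j v^(p-j) G_(p-j)(-delta4, 1);
   the term j = 0 vanishes, and dividing by s gives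
   H_p(u, v) = p v^(p-1) G_(p-1)(-delta4, 1) + sum_(j >= 2) C(p, j) s^(j-1) (...).
   When s = 3^m and e = v_3(n), every term of the last sum is divisible by 3^(e+1),
   v^(p-1) = (v^2)^n = 1 modulo 3^(e+1), and G_(p-1)(-delta4, 1) = (-1)^(n/2) 2^n,
   which is (-1)^(n/2 + n) modulo 3^(e+1) since -2 = 1 (mod 3).  Hence
   1 = H_p(u, v) = +-p (mod 3^(e+1)); the sign + would give 3^(e+1) | p - 1 = 2n,
   so the sign is -, i.e. 3 | p + 1 and n/2 + n is odd, which pins p down modulo 3
   and modulo 8. *)

Lemma logn_mul_consecutive_le r j : prime r -> (2 < r)%N ->
  (logn r (j.+2 * j.+1) <= j)%N.
Proof.
move=> r_pr r_gt2; set L := logn r _.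
have dvd_L : (r ^ L %| j.+2 * j.+1)%N := pfactor_dvdnn r _.
suff le_L : (r ^ L <= j.+2)%N.
  rewrite -ltnS -(ltn_exp2l _ _ (ltnW r_gt2)); apply: leq_ltn_trans le_L _.
  have := ltn_expl j (ltnW r_gt2); rewrite expnS; nia.
have [r_j1 | r_nj1] := boolP (r %| j.+1)%N.
  have cop : coprime (r ^ L) j.+2.
    apply: coprimeXl; rewrite prime_coprime // -addn1 dvdn_addr // dvdn1.
    by rewrite neq_ltn prime_gt1 ?orbT.
  by rewrite Gauss_dvdr // in dvd_L; rewrite (leq_trans (dvdn_leq _ dvd_L)).
have cop : coprime (r ^ L) j.+1 by apply: coprimeXl; rewrite prime_coprime.
by rewrite Gauss_dvdl // in dvd_L; apply: dvdn_leq.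
Qed.

Lemma dvdn_bin_mul_pow r n j e : prime r -> (2 < r)%N ->
  (r ^ e %| n)%N -> (j < n)%N -> (r ^ e.+1 %| 'C(n.+1, j.+2) * r ^ j.+1)%N.
Proof.
move=> r_pr r_gt2 dvd_e lt_jn; set C := 'C(n.+1, j.+2).
have C_gt0 : (0 < C)%N by rewrite bin_gt0 ltnS.
have binE : (j.+2 * j.+1 * C = n.+1 * n * 'C(n.-1, j))%N.
  by rewrite mulnAC -mul_bin_diag -mulnA [(_ * j.+1)%N]mulnC -mul_bin_diag mulnA.
have : (r ^ e %| j.+2 * j.+1 * C)%N by rewrite binE dvdn_mulr ?dvdn_mull.
have r_gt0 := prime_gt0 r_pr.
rewrite !pfactor_dvdn ?muln_gt0 ?C_gt0 ?expn_gt0 ?r_gt0 //.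
rewrite !lognM ?muln_gt0 ?C_gt0 ?expn_gt0 ?r_gt0 // pfactorK //.
by have := logn_mul_consecutive_le j r_pr r_gt2; rewrite lognM //; lia.
Qed.

Lemma dvdz_subX1 (x : int) n : (x - 1 %| x ^+ n - 1)%Z.
Proof. by rewrite subrX1 dvdz_mulr. Qed.

Lemma dvdz_sum_pow (r : nat) (x : int) : (r %| x - 1)%Z -> (r %| \sum_(i < r) x ^+ i)%Z.
Proof.
move=> dvd_r; have -> : \sum_(i < r) x ^+ i = \sum_(i < r) (x ^+ i - 1) + r%:Z.
  by rewrite sumrB sumr_const card_ord -natz subrK.
by rewrite rpredD ?rpred_sum // => i _; apply: dvdz_trans (dvdz_subX1 x i).
Qed.

Lemma dvdz_expn_sub1 (r : nat) (x : int) e :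
  (r %| x - 1)%Z -> ((r ^ e.+1)%N %| x ^+ (r ^ e) - 1)%Z.
Proof.
move=> dvd_r; elim: e => [|e IHe]; first by rewrite expn1 expr1.
rewrite [in x ^+ _]expnSr exprM subrX1 (expnSr r e.+1) PoszM.
apply: dvdz_mul => //; apply: dvdz_sum_pow.
by apply: dvdz_trans IHe; rewrite expnS PoszM dvdz_mulr.
Qed.

Lemma dvdz_pow_sub1 (r : nat) (x : int) e n :
  (r %| x - 1)%Z -> (r ^ e %| n)%N -> ((r ^ e.+1)%N %| x ^+ n - 1)%Z.
Proof.
move=> dvd_r /dvdnP [k ->]; rewrite mulnC exprM.
exact: dvdz_trans (dvdz_expn_sub1 e dvd_r) (dvdz_subX1 _ k).
Qed.

Lemma three_dvd_sqr_sub1 (v : int) : ~~ (3 %| v)%Z -> (3 %| v ^+ 2 - 1)%Z.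
Proof.
move=> ndvd_v; rewrite [v in v ^+ 2](divz_eq v 3).
have c_neq0 : (v %% 3)%Z != 0 by apply: contra ndvd_v => /eqP /dvdz_mod0P.
have c_ge0 : 0 <= (v %% 3)%Z by rewrite modz_ge0.
have c_lt3 : (v %% 3)%Z < 3 by rewrite ltz_pmod.
move: (v %% 3)%Z (v %/ 3)%Z c_neq0 c_ge0 c_lt3 => c q c_neq0 c_ge0 c_lt3.
have [->|->] : c = 1 \/ c = 2 by lia.
  by apply/dvdzP; exists (3 * q ^+ 2 + 2 * q); ring.
by apply/dvdzP; exists (3 * q ^+ 2 + 4 * q + 1); ring.
Qed.

(* complex.v builds the ring structure of R[i] only for a field R. *)
Definition gint := complex int.
HB.instance Definition _ := GRing.Zmodule.on gint.

Lemma gint_mul1 : left_id (Complex 1 0 : gint) (@mulc int).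
Proof. by move=> [a b] /=; rewrite !mul1r !mul0r subr0 addr0. Qed.

Lemma gint_mulDl : left_distributive (@mulc int : gint -> gint -> gint) (@addc int).
Proof.
move=> [a b] [c d] [e f] /=; rewrite !mulrDl !opprD -!addrA.
by congr (Complex (_ + _) (_ + _)); rewrite addrCA.
Qed.

HB.instance Definition _ := GRing.Zmodule_isComNzRing.Build gint
  (@mulcA int) (@mulcC int) gint_mul1 gint_mulDl
  (isT : Complex 1 0 != Complex 0 0 :> gint).

Local Notation "a +i* b" := (Complex a b : gint).
Local Notation gi := (0 +i* 1).

Definition gIm : gint -> int := @complex.Im int.

Lemma gIm_is_zmod_morphism : zmod_morphism gIm.
Proof. by move=> [a b] [c d]. Qed.
HB.instance Definition _ :=
  GRing.isZmodMorphism.Build gint int gIm gIm_is_zmod_morphism.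

Definition greal (c : int) : gint := c +i* 0.

Lemma greal_is_zmod_morphism : zmod_morphism greal.
Proof. by move=> a b; rewrite /greal /= -[0 in LHS](subr0 0). Qed.
Lemma greal_is_monoid_morphism : monoid_morphism greal.
Proof. by split=> // a b; rewrite /greal /GRing.mul /= !mulr0 mul0r subr0 addr0. Qed.
HB.instance Definition _ :=
  GRing.isZmodMorphism.Build int gint greal greal_is_zmod_morphism.
HB.instance Definition _ :=
  GRing.isMonoidMorphism.Build int gint greal greal_is_monoid_morphism.

Lemma gIm_mulr_real x c : gIm (x * greal c) = gIm x * c.
Proof. by case: x => a b; rewrite /gIm /= mulr0 add0r. Qed.

Lemma gi_sqr : gi * gi = greal (-1). Proof. by []. Qed.

Lemma gIm_ipow k : gIm ((1 +i* 1) * gi ^+ k) = (-1) ^+ (k./2).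
Proof.
elim: k {-2}k (leqnn k) => [|n IH] [|[|k]] // hk.
rewrite -addn2 exprD expr2 gi_sqr mulrA gIm_mulr_real IH ?mulrN1 //.
by rewrite addn2 /= exprS mulN1r.
by rewrite -ltnS (leq_trans _ hk) // addn2.
Qed.

Lemma G_gIm p u v : G p u v = gIm ((1 +i* 1) * (u +i* v) ^+ p).
Proof.
have -> : u +i* v = greal u + gi * greal v.
  by rewrite /greal /GRing.add /GRing.mul /=; congr Complex; ring.
rewrite exprDn mulr_sumr raddf_sum; apply: eq_bigr => k _.
rewrite mulrnAr raddfMn exprMn -!rmorphXn /=.
rewrite [X in gIm X](_ : _ = (1 +i* 1) * gi ^+ k * greal (u ^+ (p - k) * v ^+ k)).
  by rewrite gIm_mulr_real gIm_ipow /gcoef -mulr_natr natz; ring.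
by rewrite rmorphM; ring.
Qed.

Lemma G_shift p d u v : G p u v =
  \sum_(j < p.+1) ('C(p, j))%:Z * (u + d * v) ^+ j * v ^+ (p - j) * G (p - j) (- d) 1.
Proof.
rewrite G_gIm.
have -> : u +i* v = (- d +i* 1) * greal v + greal (u + d * v) by congr Complex; ring.
rewrite exprDn mulr_sumr raddf_sum; apply: eq_bigr => j _.
rewrite mulrnAr raddfMn exprMn -!rmorphXn /=.
rewrite [X in gIm X](_ : _ = (1 +i* 1) * (- d +i* 1) ^+ (p - j)
                             * greal (v ^+ (p - j) * (u + d * v) ^+ j)).
  by rewrite gIm_mulr_real -G_gIm -mulr_natr natz; ring.
by rewrite rmorphM; ring.
Qed.

Lemma gi_pow_double k : gi ^+ k.*2 = greal ((-1) ^+ k).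
Proof. by rewrite -mul2n exprM expr2 gi_sqr rmorphXn. Qed.

Lemma gi_sub_unit_sqr d : d ^+ 2 = 1 -> (- d +i* 1) ^+ 2 = greal (-2 * d) * gi.
Proof.
move=> d2; rewrite expr2.
rewrite -[LHS]/(Complex (- d * - d - 1 * 1) (- d * 1 + 1 * - d)).
rewrite -[RHS]/(Complex (-2 * d * 0 - 0 * 1) (-2 * d * 1 + 0 * 0)).
by rewrite mulrNN -expr2 d2; congr Complex; ring.
Qed.

Lemma G_double_unit d n : d ^+ 2 = 1 ->
  G n.*2 (- d) 1 = (-2 * d) ^+ n * (-1) ^+ n./2.
Proof.
move=> d2; rewrite G_gIm -mul2n exprM gi_sub_unit_sqr // exprMn -rmorphXn.
by rewrite mulrCA mulrC gIm_mulr_real gIm_ipow mulrC.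
Qed.

Lemma delta4_odd n : delta4 n.*2.+1 = (-1) ^+ n.
Proof.
rewrite /delta4 -signr_odd.
have -> : (n.*2.+1 %% 4 == 1)%N = ~~ odd n.
  by rewrite -[in LHS](odd_double_half n); case: (odd n) => /=; lia.
by case: (odd n).
Qed.

Lemma G_odd_sign_root n : G n.*2.+1 (- (-1) ^+ n) 1 = 0.
Proof.
have [c hc] : exists c, (1 +i* 1) * (- (-1) ^+ n +i* 1) * gi ^+ n = greal c.
  exists (-2 * (-1) ^+ n./2); rewrite rmorphM /= -gi_pow_double.
  rewrite -signr_odd -[in gi ^+ n](odd_double_half n); case: (odd n) => /=.
    by rewrite [gi ^+ _]exprS mulrA; congr (_ * _).
  by congr (_ * _).
rewrite G_gIm exprS -mul2n exprM gi_sub_unit_sqr ?sqrr_sign // exprMn -rmorphXn.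
by rewrite mulrA [greal _ * _]mulrC mulrA hc gIm_mulr_real mul0r.
Qed.

(* G p and H p.+1 are, definitionally, binform (gcoef p) p and binform (hcoef p.+1) p. *)
Definition binform (a : nat -> int) n (u v : int) : int :=
  \sum_(k < n.+1) a k * u ^+ (n - k) * v ^+ k.

Lemma binformS a n u v :
  binform a n.+1 u v = u * binform a n u v + a n.+1 * v ^+ n.+1.
Proof.
rewrite /binform big_ord_recr subnn expr0 mulr1 mulr_sumr /=; congr (_ + _).
apply: eq_bigr => k _; have le_kn : (k <= n)%N := ltn_ord k.
by rewrite subSn // exprS; ring.
Qed.

Lemma binform_synthetic_division (g h : nat -> int) c n u v :
  h 0%N = g 0%N -> (forall k, h k.+1 = g k.+1 - c * h k) ->
  binform g n.+1 u v = (u + c * v) * binform h n u v + h n.+1 * v ^+ n.+1.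
Proof.
move=> h0 hS; elim: n => [|n IHn].
  by rewrite /binform !big_ord_recr !big_ord0 /= hS h0 !subn0 subnn; ring.
by rewrite binformS IHn [binform h n.+1 u v]binformS (hS n.+1) (exprS v n.+1); ring.
Qed.

Lemma G_divmod p u v : (0 < p)%N ->
  G p u v = (u + delta4 p * v) * H p u v + hcoef p p * v ^+ p.
Proof. by case: p => // p _; apply: binform_synthetic_division. Qed.

Lemma G_delta4_root p : odd p -> G p (- delta4 p) 1 = 0.
Proof.
move=> p_odd; rewrite -(odd_double_half p) p_odd add1n delta4_odd.
exact: G_odd_sign_root.
Qed.

Lemma G_factor p u v : odd p -> G p u v = (u + delta4 p * v) * H p u v.
Proof.
move=> p_odd; have p_gt0 := odd_gt0 p_odd.
have hcoef_p : hcoef p p = 0.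
  have := G_divmod (- delta4 p) 1 p_gt0.
  by rewrite G_delta4_root // mulr1 addNr mul0r add0r expr1n mulr1.
by rewrite G_divmod // hcoef_p mul0r addr0.
Qed.

Lemma H_shift p u v : odd p -> u + delta4 p * v != 0 ->
  H p u v = \sum_(j < p) ('C(p, j.+1))%:Z * (u + delta4 p * v) ^+ j
                       * v ^+ (p - j.+1) * G (p - j.+1) (- delta4 p) 1.
Proof.
move=> p_odd s_neq0; apply: (mulfI s_neq0); rewrite -G_factor //.
rewrite (G_shift p (delta4 p)) big_ord_recl subn0 G_delta4_root // mulr0 add0r.
by rewrite mulr_sumr; apply: eq_bigr => j _; rewrite exprS; ring.
Qed.

Lemma H_congr r e p u v : prime r -> (2 < r)%N -> odd p -> (r ^ e %| p.-1)%N ->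
  (r %| u + delta4 p * v)%Z -> u + delta4 p * v != 0 ->
  ((r ^ e.+1)%N %| H p u v - p%:Z * v ^+ p.-1 * G p.-1 (- delta4 p) 1)%Z.
Proof.
move=> r_pr r_gt2 p_odd dvd_e dvd_s s_neq0; rewrite H_shift //.
case: p p_odd dvd_e dvd_s s_neq0 => [//|q] _ /= dvd_e dvd_s s_neq0.
rewrite big_ord_recl /= bin1 expr0 mulr1 subn1 addrC addKr.
apply: rpred_sum => j _; rewrite /bump /= add1n; apply/dvdz_mulr/dvdz_mulr.
apply: (@dvdz_trans ('C(q.+1, j.+2) * r ^ j.+1)%N).
  exact: dvdn_bin_mul_pow r_pr r_gt2 dvd_e (ltn_ord j).
by rewrite PoszM -[Posz (r ^ _)]natz natrX natz; apply: dvdz_mul => //; apply: dvdz_exp2r.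
Qed.

Lemma G_double_delta4 n : G n.*2 (- delta4 n.*2.+1) 1 = (-1) ^+ n./2 * 2 ^+ n.
Proof.
rewrite delta4_odd G_double_unit ?sqrr_sign // mulrC; congr (_ * _).
by rewrite exprMn -exprM -signr_odd oddM andbb signr_odd -exprMn mulrN1 opprK.
Qed.

Lemma H_pow3_congr p m u v : odd p -> (0 < m)%N -> gcdz u v = 1 ->
  u + delta4 p * v = 3 ^+ m ->
  ((3 ^ (logn 3 p./2).+1)%N %| H p u v - p%:Z * (-1) ^+ (p./2./2 + p./2))%Z.
Proof.
move=> p_odd m_gt0 gcd_uv s_eq; set n := p./2; set e := logn 3 n.
have p_eq : p = n.*2.+1 by rewrite -[in LHS](odd_double_half p) p_odd.
have dvd3_s : (3 %| u + delta4 p * v)%Z by rewrite s_eq dvdz_exp.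
have s_neq0 : u + delta4 p * v != 0 by rewrite s_eq expf_neq0.
have ndvd3_v : ~~ (3 %| v)%Z.
  apply/negP => dvd3_v; suff : (3 %| gcdz u v)%Z by rewrite gcd_uv.
  rewrite dvdz_gcd dvd3_v andbT -(addrK (delta4 p * v) u).
  by rewrite rpredB ?dvdz_mull.
have dvd_e : (3 ^ e %| n)%N := pfactor_dvdnn 3 n.
have dvd_v : ((3 ^ e.+1)%N %| v ^+ n.*2 - 1)%Z.
  by rewrite -mul2n exprM; apply: dvdz_pow_sub1 (three_dvd_sqr_sub1 ndvd3_v) dvd_e.
have dvd_2 : ((3 ^ e.+1)%N %| 2 ^+ n - (-1) ^+ n)%Z.
  have -> : 2 ^+ n - (-1) ^+ n = (-1) ^+ n * ((-2) ^+ n - 1) :> int.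
    by rewrite mulrBr mulr1 -exprMn mulN1r opprK.
  by apply: dvdz_mull; apply: dvdz_pow_sub1 dvd_e.
have dvd_e_pred : (3 ^ e %| p.-1)%N by rewrite p_eq -mul2n dvdn_mull.
have := H_congr (isT : prime 3) (isT : (2 < 3)%N) p_odd dvd_e_pred dvd3_s s_neq0.
rewrite p_eq /= G_double_delta4 => dvd_H.
set V := v ^+ n.*2 in dvd_v dvd_H *.
have -> : H n.*2.+1 u v - n.*2.+1%:Z * (-1) ^+ (n./2 + n) =
    (H n.*2.+1 u v - n.*2.+1%:Z * V * ((-1) ^+ n./2 * 2 ^+ n))
    + n.*2.+1%:Z * ((-1) ^+ n./2 * 2 ^+ n) * (V - 1)
    + n.*2.+1%:Z * (-1) ^+ n./2 * (2 ^+ n - (-1) ^+ n).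
  by rewrite exprD; ring.
by apply: rpredD; [apply: rpredD => // |]; apply: dvdz_mull.
Qed.

Lemma mod24_of_sign_congr p : odd p -> (1 < p)%N ->
  ((3 ^ (logn 3 p./2).+1)%N %| 1 - p%:Z * (-1) ^+ (p./2./2 + p./2))%Z ->
  (p %% 24 = 5)%N \/ (p %% 24 = 11)%N.
Proof.
move=> p_odd p_gt1; set n := p./2.
have p_eq : p = n.*2.+1 by rewrite -[in LHS](odd_double_half p) p_odd.
have n_gt0 : (0 < n)%N by move: p_gt1; rewrite p_eq ltnS double_gt0.
rewrite -signr_odd; case sign_odd : (odd (n./2 + n)) => /=.
  rewrite mulrN1 opprK => dvd_p.
  have dvd3_p : (3 %| p.+1)%N.
    have : (3 %| 1 + p%:Z)%Z.
      by apply: dvdz_trans dvd_p; rewrite dvdzE /= expnS dvdn_mulr.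
    by rewrite addrC -PoszD addn1.
  move: sign_odd dvd3_p; rewrite p_eq -(odd_double_half n).
  by case: (odd n) => /=; rewrite ?add0n ?uphalf_double ?half_double; lia.
rewrite mulr1 p_eq (_ : 1 - _ = - (n.*2)%:Z) ?rpredN; last by lia.
rewrite dvdzE /= -mul2n Gauss_dvdr; last by rewrite coprimeXl.
by rewrite pfactor_dvdn // ltnn.
Qed.

Theorem lemma9 (p m : nat) (u v : int) :
  prime p -> (5 <= p)%N -> (0 < m)%N ->
  gcdz u v = 1 ->
  u + delta4 p * v = 3 ^+ m ->
  H p u v = 1 ->
  (p %% 24 = 5)%N \/ (p %% 24 = 11)%N.
Proof.
move=> p_pr p_ge5 m_gt0 gcd_uv s_eq H_eq1.
have p_odd : odd p by case: (even_prime p_pr) p_ge5 => // ->.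
apply: mod24_of_sign_congr => //; first exact: leq_trans p_ge5.
by have := H_pow3_congr p_odd m_gt0 gcd_uv s_eq; rewrite H_eq1.
Qed.
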